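(* Let $n_1\ge1$, $n_2\ge1$ with $n_1+n_2\ge3$. Let $\mathcal L$ be the real Lie algebra generated by all block diagonal matrices $\begin{pmatrix}A&0\\0&B\end{pmatrix}$ with $A\in su(n_1)$, $B\in su(n_2)$ arbitrary, together with a single matrix which has entries $i$ in positions $(j,m)$ and $(m,j)$ and zeros elsewhere, for some fixed $1\le j\le n_1$ and $n_1+1\le m\le n_1+n_2$. Then $\mathcal L=su(n_1+n_2)$. *)

From HB Require Import structures.
From mathcomp Require Import all_boot all_order all_algebra.
From mathcomp Require Import complex.
Set Implicit Arguments. Unset Strict Implicit. Unset Printing Implicit Defensive.
Import Order.TTheory GRing.Theory Num.Theory.
Local Open Scope ring_scope.
Local Open Scope complex_scope.

Definition adjmx (R : rcfType) (n : nat) (A : 'M[R[i]]_n) : 'M[R[i]]_n :=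
  map_mx (fun z => z^*) A^T.

Definition su (R : rcfType) (n : nat) : 'M[R[i]]_n -> Prop :=
  fun A => adjmx A = - A /\ \tr A = 0.

Definition real_lie_subalg (R : rcfType) (n : nat) (S : 'M[R[i]]_n -> Prop) : Prop :=
  [/\ S 0,
      (forall A B, S A -> S B -> S (A + B)),
      (forall (r : R) A, S A -> S (r%:C *: A)) &
      (forall A B, S A -> S B -> S (A *m B - B *m A))].

Definition lie_gen (R : rcfType) (n : nat) (G : 'M[R[i]]_n -> Prop) : 'M[R[i]]_n -> Prop :=
  fun A => forall S, real_lie_subalg S -> (forall X, G X -> S X) -> S A.

Definition gens6p1 (R : rcfType) (n1 n2 : nat) (j m : 'I_(n1 + n2))
  : 'M[R[i]]_(n1 + n2) -> Prop :=
  fun X => (exists (A : 'M[R[i]]_n1) (B : 'M[R[i]]_n2),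
              [/\ su A, su B & X = block_mx A 0 0 B])
           \/ X = \matrix_(p, q) (if ((p == j) && (q == m)) || ((p == m) && (q == j))
                                  then 'i else 0).

From HB Require Import structures.
From mathcomp Require Import all_boot all_order all_algebra.
From mathcomp Require Import complex.
From mathcomp Require Import ring lra zify.
Set Implicit Arguments. Unset Strict Implicit. Unset Printing Implicit Defensive.
Import Order.TTheory GRing.Theory Num.Theory.
Local Open Scope ring_scope.
Local Open Scope complex_scope.

(* One inclusion holds because su(n) is itself a real Lie algebra containing the
   generators. For the other, say that indices a, b are linked in a real Lie subalgebra S
   when a = b or S contains both E_ab - E_ba and i(E_ab + E_ba). For distinct a, b, c the
   commutators [E_ab - E_ba, E_bc - E_cb] = E_ac - E_ca, [i(E_ab + E_ba), E_bc - E_cb] =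
   i(E_ac + E_ca) and [i(E_ab + E_ba), i(E_bc + E_cb)] = E_ca - E_ac make linkedness
   transitive, and let i(E_ab + E_ba) alone link a to every index linked to b. Since
   [E_ab - E_ba, i(E_ab + E_ba)] = 2i(E_aa - E_bb) gives the diagonal part, S contains
   su(n) as soon as all indices are linked. The block-diagonal generators link indices
   within a block; a third index k, which exists as n1 + n2 >= 3, lies in the block of j
   or of m, and then the generator i(E_jm + E_mj) links j with m across the blocks. *)

Lemma conjc_i (R : rcfType) : conjc 'i%C = - 'i%C :> R[i].
Proof. by apply/eqP; rewrite eq_complex /= oppr0 !eqxx. Qed.

Section Adjoint.
Context {R : rcfType} {n : nat}.
Implicit Types (A B : 'M[R[i]]_n) (a b : 'I_n).

Lemma adjmxE A p q : adjmx A p q = conjc (A q p).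
Proof. by rewrite !mxE. Qed.

Lemma adjmxD A B : adjmx (A + B) = adjmx A + adjmx B.
Proof. by apply/matrixP=> p q; rewrite !mxE rmorphD. Qed.

Lemma adjmxN A : adjmx (- A) = - adjmx A.
Proof. by apply/matrixP=> p q; rewrite !mxE rmorphN. Qed.

Lemma adjmxZ c A : adjmx (c *: A) = conjc c *: adjmx A.
Proof. by apply/matrixP=> p q; rewrite !mxE rmorphM. Qed.

Lemma adjmxM A B : adjmx (A *m B) = adjmx B *m adjmx A.
Proof. by rewrite /adjmx trmx_mul map_mxM. Qed.

Lemma adjmx_delta a b : adjmx (delta_mx a b : 'M[R[i]]_n) = delta_mx b a.
Proof. by rewrite /adjmx trmx_delta; apply/matrixP=> p q; rewrite !mxE conjc_nat. Qed.

Lemma skew_adjmxP A : adjmx A = - A <-> forall p q, conjc (A q p) = - A p q.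
Proof.
split=> [skA p q|skA]; first by rewrite -adjmxE skA mxE.
by apply/matrixP=> p q; rewrite adjmxE skA mxE.
Qed.

Lemma su_real_lie_subalg : real_lie_subalg (@su R n).
Proof.
split.
- by rewrite /su /adjmx linear0 map_mx0 oppr0 mxtrace0.
- move=> A B [skA trA] [skB trB].
  by rewrite /su adjmxD skA skB opprD mxtraceD trA trB addr0.
- move=> r A [skA trA].
  by rewrite /su adjmxZ conjc_real skA scalerN mxtraceZ trA mulr0.
- move=> A B [skA trA] [skB trB].
  rewrite /su adjmxD adjmxN !adjmxM skA skB !mulNmx !mulmxN !opprK opprB.
  by rewrite mxtraceD linearN /= mxtrace_mulC subrr.
Qed.

End Adjoint.

Lemma mxtrace_delta (T : pzSemiRingType) (n : nat) (a b : 'I_n) :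
  \tr (delta_mx a b : 'M[T]_n) = (a == b)%:R.
Proof.
rewrite /mxtrace (bigD1 a) //= big1 => [|p pa]; first by rewrite mxE eqxx addr0.
by rewrite mxE (negbTE pa).
Qed.

Definition mxbracket (T : pzRingType) (n : nat) (A B : 'M[T]_n) := A *m B - B *m A.

Section RealLieSubalgebra.
Context {R : rcfType} {n : nat} (S : 'M[R[i]]_n -> Prop).
Hypothesis S_lie : real_lie_subalg S.

Lemma lie0 : S 0. Proof. by case: S_lie. Qed.

Lemma lieD A B : S A -> S B -> S (A + B). Proof. by case: S_lie => _ SD _ _; apply: SD. Qed.

Lemma lieZ (r : R) A : S A -> S (r%:C *: A). Proof. by case: S_lie => _ _ SZ _; apply: SZ. Qed.

Lemma lieR A B : S A -> S B -> S (mxbracket A B).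
Proof. by case: S_lie => _ _ _ SR; apply: SR. Qed.

Lemma lieN A : S A -> S (- A).
Proof. by move=> SA; rewrite -scaleN1r -(rmorph1 (real_complex R)) -rmorphN; apply: lieZ. Qed.

Lemma lie_sum (I : Type) (r : seq I) (P : pred I) (F : I -> 'M[R[i]]_n) :
  (forall i, P i -> S (F i)) -> S (\sum_(i <- r | P i) F i).
Proof. by move=> SF; apply: big_ind => //; [exact: lie0 | exact: lieD]. Qed.

End RealLieSubalgebra.

Section LieGen.
Context {R : rcfType} {n : nat} (G : 'M[R[i]]_n -> Prop).

Lemma lie_gen_real_lie_subalg : real_lie_subalg (lie_gen G).
Proof.
split=> [S [] //|A B LA LB S S_lie SG|r A LA S S_lie SG|A B LA LB S S_lie SG].
- by apply: lieD (LA S S_lie SG) (LB S S_lie SG).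
- by apply: lieZ (LA S S_lie SG).
- exact: (lieR S_lie (LA S S_lie SG) (LB S S_lie SG)).
Qed.

Lemma lie_gen_gen X : G X -> lie_gen G X.
Proof. by move=> GX S _ SG; apply: SG. Qed.

End LieGen.

Section StandardBasis.
Context {R : rcfType} {n : nat}.
Implicit Types (a b c p q : 'I_n).

Definition su_re a b : 'M[R[i]]_n := delta_mx a b - delta_mx b a.
Definition su_im a b : 'M[R[i]]_n := 'i%C *: (delta_mx a b + delta_mx b a).
Definition su_diag a b : 'M[R[i]]_n := 'i%C *: (delta_mx a a - delta_mx b b).

Lemma su_reC a b : su_re b a = - su_re a b.
Proof. by rewrite /su_re opprB. Qed.

Lemma su_imC a b : su_im b a = su_im a b.
Proof. by rewrite /su_im addrC. Qed.

Lemma su_re_su a b : su (su_re a b).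
Proof.
split; first by rewrite /su_re adjmxD adjmxN !adjmx_delta opprB addrC.
by rewrite /su_re linearB /= !mxtrace_delta eq_sym subrr.
Qed.

Lemma su_im_su a b : a != b -> su (su_im a b).
Proof.
move=> ab; split.
  by rewrite /su_im adjmxZ adjmxD !adjmx_delta conjc_i scaleNr addrC.
by rewrite /su_im linearZ linearD /= !mxtrace_delta [b == a]eq_sym (negPf ab) addr0 mulr0.
Qed.

Section Brackets.
Variables a b c : 'I_n.
Hypotheses (ab : a != b) (bc : b != c) (ac : a != c).

Let ba : b != a. Proof. by rewrite eq_sym. Qed.
Let cb : c != b. Proof. by rewrite eq_sym. Qed.
Let ca : c != a. Proof. by rewrite eq_sym. Qed.
Let neqF := (negbTE ab, negbTE bc, negbTE ac, negbTE ba, negbTE cb, negbTE ca).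

Lemma mxbracket_re_re : mxbracket (su_re a b) (su_re b c) = su_re a c.
Proof.
rewrite /mxbracket /su_re !(mulmxBl, mulmxBr) !mul_delta_mx_cond !eqxx.
by rewrite !neqF !(mulr0n, mulr1n, oppr0, subr0, sub0r, addr0, add0r, opprK).
Qed.

Lemma mxbracket_im_re : mxbracket (su_im a b) (su_re b c) = su_im a c.
Proof.
rewrite /mxbracket /su_im /su_re -scalemxAl -scalemxAr -scalerBr; congr (_ *: _).
rewrite !(mulmxDl, mulmxBl, mulmxDr, mulmxBr, mulNmx, mulmxN) !mul_delta_mx_cond !eqxx.
by rewrite !neqF !(mulr0n, mulr1n, oppr0, subr0, sub0r, addr0, add0r, opprK).
Qed.

Lemma mxbracket_im_im : mxbracket (su_im a b) (su_im b c) = - su_re a c.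
Proof.
rewrite /mxbracket /su_im /su_re -!scalemxAl -!scalemxAr !scalerA -expr2 sqr_i.
rewrite -scalerBr scaleN1r; congr (- _).
rewrite !(mulmxDl, mulmxDr) !mul_delta_mx_cond !eqxx.
by rewrite !neqF !(mulr0n, mulr1n, oppr0, subr0, sub0r, addr0, add0r, opprK).
Qed.

End Brackets.

Lemma mxbracket_re_im a b :
  a != b -> mxbracket (su_re a b) (su_im a b) = su_diag a b *+ 2.
Proof.
move=> ab; have ba : b != a by rewrite eq_sym.
rewrite /mxbracket /su_im /su_re /su_diag -scalemxAl -scalemxAr -scalerBr scalerMnr.
congr (_ *: _).
rewrite !(mulmxDl, mulmxBl, mulmxDr, mulmxBr, mulNmx, mulmxN) !mul_delta_mx_cond !eqxx.
rewrite !(negbTE ab, negbTE ba) !(mulr0n, mulr1n, oppr0, subr0, sub0r, addr0, add0r, opprK).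
by rewrite opprB mulr2n.
Qed.

End StandardBasis.

Lemma matrix_sum_delta_pairs (T : pzSemiRingType) (n : nat) (A : 'M[T]_n) :
  A = \sum_(p < n) \sum_(q < n | (p < q)%N) (A p q *: delta_mx p q + A q p *: delta_mx q p)
      + \sum_(p < n) A p p *: delta_mx p p.
Proof.
pose F (p q : 'I_n) := A p q *: delta_mx p q.
have row_split p : \sum_q F p q =
    \sum_(q < n | (p < q)%N) F p q + \sum_(q < n | (q < p)%N) F p q + F p p.
  rewrite (bigD1 p) //= addrC (bigID (fun q : 'I_n => (p < q)%N)) /=.
  congr (_ + _); congr (_ + _); apply: eq_bigl => q.
    by rewrite andb_idl // => pq; rewrite neq_ltn pq orbT.
  by rewrite -leqNgt ltn_neqAle andbC.
have swap : \sum_(p < n) \sum_(q < n | (q < p)%N) F p q =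
             \sum_(p < n) \sum_(q < n | (p < q)%N) F q p.
  exact: (exchange_big_dep predT).
rewrite {1}(matrix_sum_delta A) (eq_bigr _ (fun p _ => row_split p)) !big_split /= swap.
by rewrite -big_split /=; under eq_bigr do rewrite -big_split.
Qed.

Section Decomposition.
Context {R : rcfType} {n : nat}.
Implicit Types (p q k : 'I_n) (A : 'M[R[i]]_n).

Lemma skew_scalar_imag (z : R[i]) : conjc z = - z -> z = (complex.Im z)%:C * 'i%C.
Proof.
case: z => x y /eqP; rewrite eq_complex /= => /andP[/eqP x0 _].
by apply/eqP; rewrite eq_complex /=; apply/andP; split; apply/eqP; lra.
Qed.

Lemma skew_pair_decomp (a : R[i]) p q :
  a *: delta_mx p q - conjc a *: delta_mx q p =
  (complex.Re a)%:C *: su_re p q + (complex.Im a)%:C *: su_im p q :> 'M[R[i]]_n.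
Proof.
case: a => x y /=; rewrite [x +i* y]complexE [x -i* y]complexE /= rmorphN.
by apply/matrixP=> r s; rewrite !mxE; ring.
Qed.

Lemma su_decomp k A : su A ->
  A = \sum_(p < n) \sum_(q < n | (p < q)%N)
        ((complex.Re (A p q))%:C *: su_re p q + (complex.Im (A p q))%:C *: su_im p q)
      + \sum_(p < n) (complex.Im (A p p))%:C *: su_diag p k.
Proof.
move=> [/skew_adjmxP skA trA].
have diagA p : A p p = (complex.Im (A p p))%:C * 'i%C.
  by apply: skew_scalar_imag; apply: skA.
rewrite {1}(matrix_sum_delta_pairs A); congr (_ + _).
  apply: eq_bigr => p _; apply: eq_bigr => q _.
  by rewrite -skew_pair_decomp -[A q p]opprK -skA scaleNr.
under [RHS]eq_bigr do rewrite scalerA scalerBr.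
rewrite sumrB -scaler_suml.
have -> : \sum_(p < n) (complex.Im (A p p))%:C * 'i%C = 0.
  by rewrite -[RHS]trA; apply: eq_bigr => p _; rewrite -diagA.
by rewrite scale0r subr0; apply: eq_bigr => p _; rewrite -diagA.
Qed.

End Decomposition.

Section Linked.
Context {R : rcfType} {n : nat} (S : 'M[R[i]]_n -> Prop).
Hypothesis S_lie : real_lie_subalg S.
Implicit Types a b c p q : 'I_n.

Definition su_linked a b := a = b \/ S (su_re a b) /\ S (su_im a b).

Lemma su_linked_sym a b : su_linked a b -> su_linked b a.
Proof.
case=> [->|[Sre Sim]]; first by left.
by right; rewrite su_reC su_imC; split; first exact: (lieN S_lie).
Qed.

Lemma su_linked_trans a b c : su_linked a b -> su_linked b c -> su_linked a c.
Proof.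
move=> lab lbc; have [->|ac] := eqVneq a c; first by left.
have [ab_eq|ab] := eqVneq a b; first by rewrite ab_eq.
have [bc_eq|bc] := eqVneq b c; first by rewrite -bc_eq.
case: lab => [/eqP|[reab imab]]; first by rewrite (negbTE ab).
case: lbc => [/eqP|[rebc imbc]]; first by rewrite (negbTE bc).
right; rewrite -(mxbracket_re_re ab bc ac) -(mxbracket_im_re ab bc ac).
by split; apply: (lieR S_lie).
Qed.

Lemma su_linked_bridge a b c : a != b -> b != c -> a != c ->
  S (su_im a b) -> su_linked b c -> su_linked a c.
Proof.
move=> ab bc ac imab [/eqP|[rebc imbc]]; first by rewrite (negbTE bc).
right; rewrite -(mxbracket_im_re ab bc ac) -[su_re a c]opprK -(mxbracket_im_im ab bc ac).
by split; [apply: (lieN S_lie)|]; apply: (lieR S_lie).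
Qed.

Lemma lie_su_diag p q : su_linked p q -> S (su_diag p q).
Proof.
have [<- _|pq] := eqVneq p q.
  by rewrite /su_diag subrr scaler0; exact: (lie0 S_lie).
case=> [/eqP|[re im]]; first by rewrite (negbTE pq).
have -> : su_diag p q = (2^-1 : R)%:C *: mxbracket (su_re p q) (su_im p q).
  rewrite mxbracket_re_im // -scaler_nat scalerA -(rmorph_nat (real_complex R)) -rmorphM.
  by rewrite mulVf ?pnatr_eq0 // rmorph1 scale1r.
by apply: (lieZ S_lie); apply: (lieR S_lie).
Qed.

Lemma su_sub_lie : (0 < n)%N -> (forall a b, su_linked a b) -> forall A, su A -> S A.
Proof.
move=> n_gt0 linked A suA; rewrite (su_decomp (Ordinal n_gt0) suA).
apply: (lieD S_lie); apply: (lie_sum S_lie) => p _.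
  apply: (lie_sum S_lie) => q lt_pq; have pq : p != q by rewrite neq_ltn lt_pq.
  case: (linked p q) => [/eqP|[re im]]; first by rewrite (negbTE pq).
  by apply: (lieD S_lie); apply: (lieZ S_lie).
by apply: (lieZ S_lie); apply: lie_su_diag.
Qed.

End Linked.

Section BlockGenerators.
Context {R : rcfType} {n1 n2 : nat} (j m : 'I_(n1 + n2)).
Hypotheses (j_lt : (j < n1)%N) (m_ge : (n1 <= m)%N).
Implicit Types (a b p q : 'I_(n1 + n2)) (X : 'M[R[i]]_(n1 + n2)).
Local Notation L := (lie_gen (gens6p1 (R := R) j m)).

Lemma j_neq_m : j != m.
Proof. by apply: contraTneq j_lt => ->; rewrite -leqNgt. Qed.

Lemma su_im_j_m : su_im j m = \matrix_(p, q)
  (if ((p == j) && (q == m)) || ((p == m) && (q == j)) then 'i%C else 0 : R[i]).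
Proof.
apply/matrixP=> p q; rewrite !mxE.
have [/andP[/eqP-> /eqP->]|_] := boolP ((p == j) && (q == m)).
  by rewrite (negbTE j_neq_m) /= addr0 mulr1.
by rewrite /= add0r; case: ifP; rewrite ?mulr1 ?mulr0.
Qed.

Lemma gens_block_diag X : adjmx X = - X ->
  (forall p q, (p < n1)%N != (q < n1)%N -> X p q = 0) -> (forall p, X p p = 0) ->
  gens6p1 j m X.
Proof.
move=> /skew_adjmxP skX offX diagX; left; exists (ulsubmx X), (drsubmx X); split.
- split; last by rewrite /mxtrace big1 // => p _; rewrite !mxE diagX.
  by apply/skew_adjmxP=> p q; rewrite !mxE skX.
- split; last by rewrite /mxtrace big1 // => p _; rewrite !mxE diagX.
  by apply/skew_adjmxP=> p q; rewrite !mxE skX.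
rewrite -[LHS]submxK; congr block_mx; apply/matrixP=> p q; rewrite !mxE offX //=.
  by rewrite ltn_ord ltnNge leq_addr.
by rewrite ltn_ord ltnNge leq_addr.
Qed.

Lemma delta_mx_offblock a b p q :
  (a < n1)%N = (b < n1)%N -> (p < n1)%N != (q < n1)%N -> (p == a) && (q == b) = false.
Proof. by move=> ab; apply: contraNF => /andP[/eqP-> /eqP->]; rewrite ab. Qed.

Lemma delta_mx_offdiag a b p : a != b -> (p == a) && (p == b) = false.
Proof. by move=> ab; apply: contraNF ab => /andP[/eqP <- /eqP <-]. Qed.

Lemma su_linked_same_block a b : (a < n1)%N = (b < n1)%N -> su_linked L a b.
Proof.
move=> ab_blk; have [->|ab] := eqVneq a b; first by left.
have ba : b != a by rewrite eq_sym.
right; split; apply: lie_gen_gen; apply: gens_block_diag.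
- exact: (su_re_su a b).1.
- by move=> p q pq; rewrite !mxE !delta_mx_offblock // subrr.
- by move=> p; rewrite !mxE !delta_mx_offdiag // subrr.
- exact: (su_im_su ab).1.
- by move=> p q pq; rewrite !mxE !delta_mx_offblock // addr0 mulr0.
- by move=> p; rewrite !mxE !delta_mx_offdiag // addr0 mulr0.
Qed.

Lemma exists_third (N_ge3 : (3 <= n1 + n2)%N) : exists2 k, k != j & k != m.
Proof.
have := cardsC [set j; m]; rewrite cards2 j_neq_m card_ord => card_compl.
have /card_gt0P[k] : (0 < #|~: [set j; m]|)%N by lia.
by rewrite in_setC in_set2 negb_or => /andP[kj km]; exists k.
Qed.

Lemma su_linked_j_m : (3 <= n1 + n2)%N -> su_linked L j m.
Proof.
move=> N_ge3; have L_lie := lie_gen_real_lie_subalg (gens6p1 (R := R) j m).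
have L_im : L (su_im j m) := lie_gen_gen (or_intror su_im_j_m).
have [k kj km] := exists_third N_ge3.
have [jk mk] : j != k /\ m != k by rewrite ![_ == k]eq_sym.
have jm := j_neq_m; have mj : m != j by rewrite eq_sym.
case: (ltnP k n1) => [k_lt|k_ge].
  have ljk : su_linked L j k by apply: su_linked_same_block; rewrite j_lt k_lt.
  have L_im' : L (su_im m j) by rewrite su_imC.
  have lmk : su_linked L m k := su_linked_bridge L_lie mj jk mk L_im' ljk.
  exact: (su_linked_trans L_lie ljk (su_linked_sym L_lie lmk)).
have lkm : su_linked L k m by apply: su_linked_same_block; rewrite !ltnNge k_ge m_ge.
have ljk : su_linked L j k := su_linked_bridge L_lie jm mk jk L_im (su_linked_sym L_lie lkm).
exact: (su_linked_trans L_lie ljk lkm).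
Qed.

Lemma su_linked_all (N_ge3 : (3 <= n1 + n2)%N) p q : su_linked L p q.
Proof.
have L_lie := lie_gen_real_lie_subalg (gens6p1 (R := R) j m).
have linked_j a : su_linked L a j.
  case: (ltnP a n1) => [a_lt|a_ge].
    by apply: su_linked_same_block; rewrite a_lt j_lt.
  apply: (su_linked_trans L_lie _ (su_linked_sym L_lie (su_linked_j_m N_ge3))).
  by apply: su_linked_same_block; rewrite !ltnNge a_ge m_ge.
exact: (su_linked_trans L_lie (linked_j p) (su_linked_sym L_lie (linked_j q))).
Qed.

Lemma adjmx_block_diag (A : 'M[R[i]]_n1) (B : 'M[R[i]]_n2) :
  adjmx (block_mx A 0 0 B) = block_mx (adjmx A) 0 0 (adjmx B).
Proof.
rewrite /adjmx tr_block_mx map_block_mx !trmx0.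
by congr block_mx; apply/matrixP=> p q; rewrite !mxE conjc0.
Qed.

Lemma gens_su X : gens6p1 j m X -> su X.
Proof.
case=> [[A [B [[skA trA] [skB trB] ->]]]|->]; last first.
  by rewrite -su_im_j_m; exact: su_im_su j_neq_m.
split; first by rewrite adjmx_block_diag skA skB opp_block_mx !oppr0.
by rewrite mxtrace_block trA trB addr0.
Qed.

End BlockGenerators.

Theorem lemma6p1 (R : rcfType) (n1 n2 : nat) (j m : 'I_(n1 + n2)) :
  (1 <= n1)%N -> (1 <= n2)%N -> (3 <= n1 + n2)%N ->
  (j < n1)%N -> (n1 <= m)%N ->
  forall A : 'M[R[i]]_(n1 + n2), lie_gen (gens6p1 j m) A <-> su A.
Proof.
(* n1, n2 >= 1 already follow from j < n1 <= m. *)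
move=> _ _ N_ge3 j_lt m_ge A; split.
  by apply; [exact: su_real_lie_subalg | exact: gens_su].
apply: su_sub_lie; first exact: lie_gen_real_lie_subalg.
  by apply: leq_trans N_ge3.
exact: su_linked_all.
Qed.
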